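(* $\pi_3(\tau)([u])=-[L]$ in $\pi_3(SO)$, where $[u]\in\pi_3(U)$.
   Context: Identify $\mathbb{H}=\mathbb{R}^4=\mathbb{C}^2$ via $q=a+bi+cj+dk=z+wj\leftrightarrow(a,b,c,d)\leftrightarrow(z,w)$ with $z=a+bi$, $w=c+di$, and $S^3$ with the unit quaternions. $u:S^3\to U(2)$, $u_q=\begin{pmatrix}z&-\bar w\\ w&\bar z\end{pmatrix}$ for $q=z+wj$ (the complex matrix of right multiplication $p\mapsto pq$). $L:S^3\to SO(4)$ sends $q$ to the real matrix of left multiplication $p\mapsto qp$. These are composed with the stable inclusions $U(2)\subset U$, $SO(4)\subset SO$. $\tau:U\to SO$ is the map replacing each complex entry $a+bi$ by the real block $\begin{pmatrix}a&-b\\ b&a\end{pmatrix}$. It is known that $\pi_3(U)=\mathbb{Z}\langle[u]\rangle$ and $\pi_3(SO)=\mathbb{Z}\langle[L]\rangle$. *)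

From HB Require Import structures.
From mathcomp Require Import all_boot all_order all_algebra.
From mathcomp Require Import all_classical all_reals all_analysis.
From mathcomp Require Import complex.
Set Implicit Arguments. Unset Strict Implicit. Unset Printing Implicit Defensive.
Import Order.TTheory GRing.Theory Num.Theory.
Import numFieldNormedType.Exports.
Local Open Scope ring_scope.
Local Open Scope classical_set_scope.

(* Quaternions q = a + b i + c j + d k are represented by their real
   coordinate row vectors (a, b, c, d) : 'rV[R]_4. *)
Section Quat.
Variable R : realType.

Definition qa (q : 'rV[R]_4) := q 0 (inord 0).
Definition qb (q : 'rV[R]_4) := q 0 (inord 1).
Definition qc (q : 'rV[R]_4) := q 0 (inord 2).
Definition qd (q : 'rV[R]_4) := q 0 (inord 3).

Definition mkq (a b c d : R) : 'rV[R]_4 :=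
  \row_(i < 4) [:: a; b; c; d]`_i.

(* Hamilton product (i^2 = j^2 = k^2 = ijk = -1). *)
Definition qmul (p q : 'rV[R]_4) : 'rV[R]_4 :=
  mkq (qa p * qa q - qb p * qb q - qc p * qc q - qd p * qd q)
      (qa p * qb q + qb p * qa q + qc p * qd q - qd p * qc q)
      (qa p * qc q - qb p * qd q + qc p * qa q + qd p * qb q)
      (qa p * qd q + qb p * qc q - qc p * qb q + qd p * qa q).

Definition S3 : set 'rV[R]_4 := [set q | \sum_(i < 4) q 0 i ^+ 2 = 1].

Definition qone : 'rV[R]_4 := mkq 1 0 0 0.

(* L q : the real 4x4 matrix of left multiplication p |-> q p in the basis
   1, i, j, k (column j is the coordinate vector of q * e_j). *)
Definition Lmat (q : 'rV[R]_4) : 'M[R]_4 :=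
  \matrix_(i < 4, j < 4) qmul q (delta_mx 0 j) 0 i.

(* u_q = [[z, -conj w], [w, conj z]] with q = z + w j, z = a + b i,
   w = c + d i. *)
Definition umat (q : 'rV[R]_4) : 'M[R[i]]_2 :=
  let z : R[i] := (qa q +i* qb q)%C in
  let w : R[i] := (qc q +i* qd q)%C in
  \matrix_(i < 2, j < 2)
    match val i, val j with
    | 0, 0 => z | 0, _ => - (w^*)%C | _, 0 => w | _, _ => (z^*)%C end.

(* tau : replaces each complex entry x + y i by the real block
   [[x, -y], [y, x]]; real index 2 a + r corresponds to complex index a
   and to the real (r = 0) / imaginary (r = 1) part. *)
Definition realify (x : R[i]) : 'M[R]_2 :=
  \matrix_(r < 2, s < 2)
    match val r, val s with
    | 0, 0 => complex.Re x | 0, _ => - complex.Im x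
    | _, 0 => complex.Im x | _, _ => complex.Re x end.

Definition tau n (A : 'M[R[i]]_n.+1) : 'M[R]_(n.+1 * 2) :=
  \matrix_(i < n.+1 * 2, j < n.+1 * 2)
    realify (A (inord (i %/ 2)) (inord (j %/ 2))) (inord (i %% 2)) (inord (j %% 2)).

Definition stab n k (A : 'M[R]_n) : 'M[R]_(n + k) := block_mx A 0 0 1%:M.

Definition inSO N (A : 'M[R]_N) : Prop := A^T *m A = 1%:M /\ \det A = 1.

(* Two based maps f, g : S^3 -> SO(4) represent the same element of the
   stable group pi_3(SO) iff, for some k, their stabilisations in SO(4+k)
   are based-homotopic through maps S^3 -> SO(4+k). *)
Definition stably_based_homotopic (f g : 'rV[R]_4 -> 'M[R]_4) : Prop :=
  exists k : nat, exists H : R * 'rV[R]_4 -> 'M[R]_(4 + k),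
    {within `[0, 1] `*` S3, continuous H} /\
    (forall q, S3 q -> H (0, q) = stab k (f q)) /\
    (forall q, S3 q -> H (1, q) = stab k (g q)) /\
    (forall t, t \in `[0, 1] -> H (t, qone) = 1%:M) /\
    (forall t q, t \in `[0, 1] -> S3 q -> inSO (H (t, q))).

End Quat.

From HB Require Import structures.
From mathcomp Require Import all_boot all_order all_algebra.
From mathcomp Require Import all_classical all_reals all_analysis.
From mathcomp Require Import complex.
From mathcomp Require Import ring.
Set Implicit Arguments. Unset Strict Implicit. Unset Printing Implicit Defensive.
Import Order.TTheory GRing.Theory Num.Theory.
Import numFieldNormedType.Exports.
Local Open Scope ring_scope.
Local Open Scope classical_set_scope.

(* Realification sends u_q to the real matrix R_q of right multiplication
   p |-> p q. Conjugating R_q by the quaternion conjugation C = diag(1,-1,-1,-1)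
   gives left multiplication by the conjugate of q, i.e. L_q^-1 on S^3.  The
   matrix C has determinant -1, but diag(C, -1) lies in SO(5) and is joined to
   the identity by the path P_t = diag(1, rot(pi t), rot(pi t)); hence
   (t, q) |-> P_t diag(R_q, 1) P_t^T is a based homotopy in SO(5) from the
   stabilisation of tau(u) to that of L^-1. *)

Lemma continuous_fst_comp (U V W : topologicalType) (g : U -> W) :
  continuous g -> continuous (fun p : U * V => g p.1).
Proof.
move=> gcont [u v]; apply: (@continuous_comp _ _ _ fst g); last exact: gcont.
exact: (@cvg_fst _ _ (nbhs u) (nbhs v)).
Qed.

Lemma continuous_snd_comp (U V W : topologicalType) (g : V -> W) :
  continuous g -> continuous (fun p : U * V => g p.2).
Proof.
move=> gcont [u v]; apply: (@continuous_comp _ _ _ snd g); last exact: gcont.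
exact: (@cvg_snd _ _ (nbhs u) (nbhs v)).
Qed.

Section MatrixContinuity.
Variables (R : realType) (T : topologicalType).

Lemma continuous_sum (I : Type) (r : seq I) (F : I -> T -> R) :
  (forall k, continuous (F k)) -> continuous (fun x => \sum_(k <- r) F k x).
Proof.
move=> Fcont; elim: r => [|k r IHr].
  by under eq_fun do rewrite big_nil; exact: cst_continuous.
under eq_fun do rewrite big_cons.
by move=> x; apply: continuousD; [exact: Fcont | exact: IHr].
Qed.

Lemma continuous_mx m n (f : T -> 'M[R]_(m, n)) :
  (forall i j, continuous (fun x => f x i j)) -> continuous f.
Proof.
move=> fcont x A [P Pnbhs sPA].
have : \forall y \near x, forall ij : 'I_m * 'I_n, P ij.1 ij.2 (f y ij.1 ij.2).
  by apply: filter_forall => -[i j]; exact: fcont.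
by apply: filterS => y Py; apply: sPA => i j; exact: (Py (i, j)).
Qed.

Lemma continuous_mxE m n (f : T -> 'M[R]_(m, n)) i j :
  continuous f -> continuous (fun x => f x i j).
Proof.
move=> fcont x.
exact: (continuous_comp (fcont x) (@coord_continuous R m n i j (f x))).
Qed.

Lemma continuous_mulmx m n p (f : T -> 'M[R]_(m, n)) (g : T -> 'M[R]_(n, p)) :
  continuous f -> continuous g -> continuous (fun x => f x *m g x).
Proof.
move=> fcont gcont; apply: continuous_mx => i j.
under eq_fun do rewrite mxE.
apply: continuous_sum => k x.
by apply: continuousM; apply: continuous_mxE.
Qed.

Lemma continuous_trmx m n (f : T -> 'M[R]_(m, n)) :
  continuous f -> continuous (fun x => (f x)^T).
Proof.
move=> fcont; apply: continuous_mx => i j.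
by under eq_fun do rewrite mxE; exact: continuous_mxE.
Qed.

End MatrixContinuity.

Section SpecialOrthogonal.
Variable R : realType.

Lemma orthogonal_conj n (P A : 'M[R]_n) :
  P^T *m P = 1%:M -> A^T *m A = 1%:M ->
  (P *m A *m P^T)^T *m (P *m A *m P^T) = 1%:M.
Proof.
move=> PtP AtA; rewrite !trmx_mul trmxK !mulmxA -(mulmxA _ P^T P) PtP mulmx1.
by rewrite -(mulmxA P) AtA mulmx1 mulmx1C.
Qed.

Lemma inSO_conj n (P A : 'M[R]_n) :
  P^T *m P = 1%:M -> inSO A -> inSO (P *m A *m P^T).
Proof.
move=> PtP [AtA detA]; split; first exact: orthogonal_conj.
by rewrite !det_mulmx detA mulr1 -det_mulmx (mulmx1C PtP) det1.
Qed.

Lemma inSO_stab n k (A : 'M[R]_n) : inSO A -> inSO (stab k A).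
Proof.
move=> [AtA detA]; split; last by rewrite det_ublock detA det1 mulr1.
rewrite /stab tr_block_mx !trmx0 trmx1 mulmx_block.
by rewrite !mulmx0 !mul0mx !addr0 !add0r mulmx1 AtA -scalar_mx_block.
Qed.

Lemma stab_conj_block n k (P A : 'M[R]_n) :
  block_mx P 0 0 (- 1%:M) *m stab k A *m (block_mx P 0 0 (- 1%:M))^T
  = stab k (P *m A *m P^T).
Proof.
rewrite /stab tr_block_mx !trmx0 linearN /= trmx1 !mulmx_block.
rewrite !mulmx0 !mul0mx !addr0 !add0r !mulmx1.
by rewrite !mul0mx mulNmx mulmxN mulmx1 opprK.
Qed.

Lemma continuous_stab n k : continuous (@stab R n k).
Proof.
move=> A; apply: continuous_mx => i j {A}; rewrite /stab.
case: (split_ordP i) => i' ->; case: (split_ordP j) => j' ->.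
- by under eq_fun do rewrite block_mxEul; exact: coord_continuous.
- by under eq_fun do rewrite block_mxEur mxE; exact: cst_continuous.
- by under eq_fun do rewrite block_mxEdl mxE; exact: cst_continuous.
- by under eq_fun do rewrite block_mxEdr; exact: cst_continuous.
Qed.

End SpecialOrthogonal.

Lemma det_mx33 (R : comNzRingType) (M : 'M[R]_3) :
  \det M = M 0 0 * (M 1 1 * M 2 2 - M 1 2 * M 2 1)
         - M 0 1 * (M 1 0 * M 2 2 - M 1 2 * M 2 0)
         + M 0 2 * (M 1 0 * M 2 1 - M 1 1 * M 2 0).
Proof.
do 3 rewrite ?(expand_det_row _ ord0) ?big_ord_recl ?big_ord0 /cofactor ?mxE.
(* Index the entries by nat so that [/=] can evaluate the lifted ordinals. *)
set f := fun a b : nat => M (inord a) (inord b).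
have ME i j : M i j = f i j by rewrite /f !inord_val.
by rewrite !det_mx00 !ME /=; ring.
Qed.

Definition mx_of_rows {R : nmodType} {m n} (rows : seq (seq R))
  : 'M[R]_(m, n) :=
  \matrix_(i, j) nth 0 (nth [::] rows i) j.

Section QuaternionMatrices.
Variable R : realType.
Implicit Type q : 'rV[R]_4.

Definition rmul_mx q : 'M[R]_4 :=
  let a := qa q in let b := qb q in let c := qc q in let d := qd q in
  mx_of_rows [:: [:: a; -b; -c; -d]; [:: b; a; d; -c];
                 [:: c; -d; a; b];   [:: d; c; -b; a]].

Definition qconj_mx : 'M[R]_4 :=
  mx_of_rows [:: [:: 1; 0; 0; 0]; [:: 0; -1; 0; 0];
                 [:: 0; 0; -1; 0]; [:: 0; 0; 0; -1]].

Definition qnorm2 q := qa q ^+ 2 + qb q ^+ 2 + qc q ^+ 2 + qd q ^+ 2.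

Lemma sum_ord4 (F : 'I_4 -> R) :
  \sum_(i < 4) F i = F (inord 0) + F (inord 1) + F (inord 2) + F (inord 3).
Proof.
rewrite !big_ord_recl big_ord0 addr0 !addrA.
by congr (_ + _ + _ + _); congr F; apply/val_inj; rewrite /= inordK.
Qed.

Lemma S3_qnorm2 q : S3 q -> qnorm2 q = 1.
Proof. by rewrite /S3 /= sum_ord4. Qed.

Lemma tau_umat q : tau (umat q) = rmul_mx q.
Proof.
apply/matrixP => i j; rewrite !mxE.
case: i => [[|[|[|[|i]]]] Hi] //; case: j => [[|[|[|[|j]]]] Hj] //;
  by rewrite /= ?mxE /= ?inordK //= ?mxE /= ?inordK //= ?mxE ?opprK.
Qed.

Lemma rmul_mx_tr_mul q : (rmul_mx q)^T *m rmul_mx q = (qnorm2 q)%:M.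
Proof.
apply/matrixP => i j; rewrite !mxE sum_ord4 !mxE /qnorm2.
case: i => [[|[|[|[|i]]]] Hi] //; case: j => [[|[|[|[|j]]]] Hj] //;
  rewrite /= ?inordK //= ?mxE /=; ring.
Qed.

Lemma det_rmul_mx q : \det (rmul_mx q) = qnorm2 q ^+ 2.
Proof.
rewrite (expand_det_row _ ord0) !big_ord_recl big_ord0 /cofactor !det_mx33.
by rewrite !mxE /= /qnorm2; ring.
Qed.

Lemma qconj_mx_tr_mul : qconj_mx^T *m qconj_mx = 1%:M.
Proof.
apply/matrixP => i j; rewrite !mxE sum_ord4 !mxE.
case: i => [[|[|[|[|i]]]] Hi] //; case: j => [[|[|[|[|j]]]] Hj] //;
  rewrite /= ?inordK //= ?mxE /=; ring.
Qed.

(* C R_q C is the matrix of p |-> conj (conj p * q) = conj q * p. *)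
Lemma Lmat_tr q : (Lmat q)^T = qconj_mx *m rmul_mx q *m qconj_mx^T.
Proof.
apply/matrixP => i j; rewrite !mxE !sum_ord4 !mxE !sum_ord4 !mxE.
case: i => [[|[|[|[|i]]]] Hi] //; case: j => [[|[|[|[|j]]]] Hj] //;
  rewrite /qmul /mkq /= ?inordK //= ?mxE /= /qa /qb /qc /qd ?mxE /=;
  rewrite -?val_eqE /= ?inordK //=; ring.
Qed.

Lemma rmul_mx_inSO q : S3 q -> inSO (rmul_mx q).
Proof.
move=> /S3_qnorm2 q1.
by split; rewrite ?rmul_mx_tr_mul ?det_rmul_mx q1 ?expr1n.
Qed.

Lemma invmx_Lmat q : S3 q -> invmx (Lmat q) = (Lmat q)^T.
Proof.
move=> /rmul_mx_inSO [RtR _].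
have LLt : Lmat q *m (Lmat q)^T = 1%:M.
  by rewrite -{1}(trmxK (Lmat q)) Lmat_tr orthogonal_conj ?qconj_mx_tr_mul.
have [Lunit _] := mulmx1_unit LLt.
by rewrite -[RHS](mulKmx Lunit) LLt mulmx1.
Qed.

Lemma rmul_mx_qone : rmul_mx (qone R) = 1%:M.
Proof.
apply/matrixP => i j; rewrite !mxE /qa /qb /qc /qd /qone /mkq.
by case: i => [[|[|[|[|i]]]] Hi] //; case: j => [[|[|[|[|j]]]] Hj] //=;
  rewrite !mxE ?inordK //= ?oppr0.
Qed.

Lemma continuous_rmul_mx : continuous rmul_mx.
Proof.
move=> q; apply: continuous_mx => i j {q}; under eq_fun do rewrite mxE.
case: i => [[|[|[|[|i]]]] Hi] //; case: j => [[|[|[|[|j]]]] Hj] //=;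
  rewrite /qa /qb /qc /qd;
  first [exact: coord_continuous
        | by move=> q; apply: continuousN; exact: coord_continuous].
Qed.

End QuaternionMatrices.

Section RotationPath.
Variable R : realType.

Definition rot_path (t : R) : 'M[R]_(4 + 1) :=
  let c := cos (pi * t) in let s := sin (pi * t) in
  mx_of_rows [:: [:: 1; 0; 0; 0; 0]; [:: 0; c; -s; 0; 0]; [:: 0; s; c; 0; 0];
                 [:: 0; 0; 0; c; -s]; [:: 0; 0; 0; s; c]].

Lemma sum_ord5 (F : 'I_(4 + 1) -> R) :
  \sum_(i < 4 + 1) F i
  = F (inord 0) + F (inord 1) + F (inord 2) + F (inord 3) + F (inord 4).
Proof.
rewrite !big_ord_recl big_ord0 addr0 !addrA.
by congr (_ + _ + _ + _ + _); congr F; apply/val_inj; rewrite /= inordK.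
Qed.

Lemma rot_path_tr_mul t : (rot_path t)^T *m rot_path t = 1%:M.
Proof.
have cs1 := cos2Dsin2 (pi * t).
apply/matrixP => i j; rewrite !mxE sum_ord5 !mxE.
case: i => [[|[|[|[|[|i]]]]] Hi] //; case: j => [[|[|[|[|[|j]]]]] Hj] //;
  rewrite /= ?inordK //= ?mxE /=; first [ring | rewrite -[RHS]cs1; ring].
Qed.

Lemma rot_path0 : rot_path 0 = 1%:M.
Proof.
apply/matrixP => i j; rewrite !mxE mulr0 cos0 sin0 oppr0.
by case: i => [[|[|[|[|[|i]]]]] Hi] //; case: j => [[|[|[|[|[|j]]]]] Hj].
Qed.

Lemma rot_path1 : rot_path 1 = block_mx (qconj_mx R) 0 0 (- 1%:M).
Proof.
apply/matrixP => i j; rewrite [LHS]mxE mulr1 cospi sinpi oppr0.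
case: (split_ordP i) => i' ->; case: (split_ordP j) => j' ->;
  rewrite ?block_mxEul ?block_mxEur ?block_mxEdl ?block_mxEdr !mxE /=.
- by case: i' => [[|[|[|[|k]]]] Hk] //; case: j' => [[|[|[|[|l]]]] Hl].
- by case: i' => [[|[|[|[|k]]]] Hk] //; case: j' => [[|[|l]] Hl].
- by case: i' => [[|[|k]] Hk] //; case: j' => [[|[|[|[|l]]]] Hl].
- by case: i' => [[|[|k]] Hk] //; case: j' => [[|[|l]] Hl].
Qed.

Lemma continuous_rot_path : continuous rot_path.
Proof.
have pi_mul : continuous (fun t : R => pi * t).
  move=> t; apply: (@continuousM _ _ (cst pi) idfun).
    exact: cst_continuous.
  exact: cvg_id.
have cos_pi : continuous (fun t : R => cos (pi * t)).
  move=> t; apply: (@continuous_comp _ _ _ _ cos); first exact: pi_mul.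
  exact: continuous_cos.
have sin_pi : continuous (fun t : R => sin (pi * t)).
  move=> t; apply: (@continuous_comp _ _ _ _ sin); first exact: pi_mul.
  exact: continuous_sin.
move=> t; apply: continuous_mx => i j {t}; under eq_fun do rewrite mxE.
case: i => [[|[|[|[|[|i]]]]] Hi] //; case: j => [[|[|[|[|[|j]]]]] Hj] //=;
  first [exact: cst_continuous | exact: cos_pi | exact: sin_pi
        | by move=> t; apply: continuousN; exact: sin_pi].
Qed.

End RotationPath.

Theorem proposition4p4 (R : realType) :
  stably_based_homotopic (fun q : 'rV[R]_4 => tau (umat q))
                         (fun q : 'rV[R]_4 => invmx (Lmat q)).
Proof.
exists 1%N, (fun p : R * 'rV[R]_4 =>
  rot_path p.1 *m stab 1 (rmul_mx p.2) *m (rot_path p.1)^T).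
have rot_cont : continuous (fun p : R * 'rV[R]_4 => rot_path p.1).
  exact: continuous_fst_comp (@continuous_rot_path R).
have stab_cont : continuous (fun p : R * 'rV[R]_4 => stab 1 (rmul_mx p.2)).
  apply: (continuous_snd_comp (g := fun q => stab 1 (rmul_mx q))) => q.
  exact: continuous_comp (@continuous_rmul_mx R q) (@continuous_stab R 4 1 _).
split.
  apply/continuous_subspaceT/continuous_mulmx; last exact: continuous_trmx.
  exact: continuous_mulmx.
split; first by move=> q _; rewrite /= rot_path0 trmx1 mul1mx mulmx1 tau_umat.
split.
  by move=> q q1; rewrite /= rot_path1 stab_conj_block -Lmat_tr invmx_Lmat.
split.
  move=> t _; rewrite /= rmul_mx_qone /stab -scalar_mx_block mulmx1.
  exact: mulmx1C (rot_path_tr_mul t).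
move=> t q _ q1; apply: inSO_conj; first exact: rot_path_tr_mul.
by apply: inSO_stab; exact: rmul_mx_inSO.
Qed.
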